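(* The function $a\mapsto\lambda_c(a):=\|\mathbf T_{\kappa^{(a)}}\|^{-1}$ is non-increasing on $(0,\infty)$.
   Context: Fix $\tau\in(2,3)$, $\alpha=1/(\tau-1)$, constants $c_{\mathrm F},\mu>0$. For $a>0$ let $\Lambda_a(dx)=dx/a$ be normalized Lebesgue measure on $(0,a]$, $\kappa^{(a)}(u,v)=a\big[1-e^{-c_{\mathrm F}^2(uv)^{-\alpha}/\mu}\big]$ for $u,v\in(0,a]$, and $\mathbf T_{\kappa^{(a)}}$ the integral operator on $L^2((0,a],\Lambda_a)$ given by $(\mathbf T_{\kappa^{(a)}}f)(u)=\int_0^a\kappa^{(a)}(u,v)f(v)\Lambda_a(dv)$; $\|\cdot\|$ is the operator norm. *)

From mathcomp Require Import all_boot all_order all_algebra.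
From mathcomp Require Import all_classical all_reals all_analysis.
Set Implicit Arguments. Unset Strict Implicit. Unset Printing Implicit Defensive.
Import Order.TTheory GRing.Theory Num.Theory.
Local Open Scope classical_set_scope.
Local Open Scope ring_scope.

Section Defs.
Variable R : realType.

Definition alpha (tau : R) : R := (tau - 1)^-1.

Definition kappa (tau cF mu a : R) (u v : R) : R :=
  a * (1 - expR (- (cF ^+ 2 * (u * v) `^ (- alpha tau) / mu))).

(* integral against Lambda_a(dx) = dx/a on (0,a] *)
Definition Lam_int (a : R) (g : R -> \bar R) : \bar R :=
  ((a^-1)%:E * \int[lebesgue_measure]_(x in `]0%R, a%R]%classic) g x)%E.

Definition L2norm (a : R) (f : R -> R) : \bar R :=
  ((Lam_int a (fun x => (f x ^+ 2)%:E)) `^ (2^-1))%E.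

Definition Top (tau cF mu a : R) (f : R -> R) : R -> R :=
  fun u => a^-1 * Rintegral lebesgue_measure `]0, a] (fun v => kappa tau cF mu a u v * f v).

Definition unit_ball (a : R) : set (R -> R) :=
  [set f | measurable_fun `]0, a] f /\ (L2norm a f <= 1)%E].

Definition opnorm (tau cF mu a : R) : \bar R :=
  ereal_sup [set L2norm a (Top tau cF mu a f) | f in unit_ball a].

Definition lambda_c (tau cF mu a : R) : R := (fine (opnorm tau cF mu a))^-1.

End Defs.

From mathcomp Require Import all_boot all_order all_algebra.
From mathcomp Require Import all_classical all_reals all_analysis.
From mathcomp Require Import ring measurable_realfun.
Set Implicit Arguments. Unset Strict Implicit. Unset Printing Implicit Defensive.
Import Order.TTheory GRing.Theory Num.Theory.
Local Open Scope classical_set_scope.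
Local Open Scope ring_scope.

(* The kernel satisfies kappa^(b) = (b/a) kappa^(a), so the operators for
   different cut-offs only differ through the normalisation of Lambda_a.  The
   map J f = sqrt(b/a) f 1_(0,a] is an isometry from L^2((0,a], Lambda_a) into
   L^2((0,b], Lambda_b) with T_b (J f) = sqrt(b/a) T_a f pointwise; keeping
   only (0,a] in the norm of T_b (J f) gives ||T_a f|| <= ||T_b (J f)||, hence
   ||T_a|| <= ||T_b||.  Finally ||T_a|| > 0, because alpha >= 0 makes the
   kernel decreasing, so it is at least kappa^(a)(a,a) > 0 on (0,a]^2. *)

Lemma gt0_muleBr (R : realType) (c : R) (x y : \bar R) : 0 < c ->
  (c%:E * (x - y) = c%:E * x - c%:E * y)%E.
Proof.
move=> c0; have cE : (0 < c%:E)%E by rewrite lte_fin.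
case: x => [x||]; case: y => [y||] /=.
all: rewrite ?(gt0_mulye cE, gt0_mulNye cE, gt0_muleNy cE, gt0_muley cE) //.
by rewrite -EFinB -!EFinM mulrBr.
Qed.

Lemma gt0_fineZl (R : realType) (c : R) (x : \bar R) : 0 < c ->
  fine (c%:E * x)%E = c * fine x.
Proof.
move=> c0; have cE : (0 < c%:E)%E by rewrite lte_fin.
by case: x => [x||] /=; rewrite ?(gt0_muley cE, gt0_muleNy cE) ?mulr0.
Qed.

Lemma fine_invr_le (R : realType) (x y : \bar R) : (0 < x)%E -> (x <= y)%E ->
  (fine y)^-1 <= (fine x)^-1.
Proof.
case: x => [x||] //; case: y => [y||] //=; rewrite ?lte_fin ?lee_fin ?invr0 //.
- by move=> x0 xy; rewrite lef_pV2 ?posrE // (lt_le_trans x0).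
- by move=> x0 _; rewrite invr_ge0 ltW.
Qed.

(* The functions T f are not known to be measurable, so monotonicity and
   positive homogeneity of the integral are proved from the definition as a
   supremum of integrals of simple functions, without measurability. *)
Section integral_without_measurability.
Import HBNNSimple.
Context d (T : measurableType d) (R : realType) (mu : {measure set T -> \bar R}).
Local Open Scope ereal_scope.
Implicit Types (A B D : set T) (f g : T -> \bar R).

Lemma ge0_le_integral_nonmeas D f g :
  (forall x, D x -> 0 <= f x) -> (forall x, D x -> f x <= g x) ->
  \int[mu]_(x in D) f x <= \int[mu]_(x in D) g x.
Proof.
move=> f0 fg.
have g0 x : D x -> 0 <= g x by move=> Dx; exact: le_trans (f0 x Dx) (fg x Dx).
rewrite (ge0_integralE mu f0) (ge0_integralE mu g0).
apply: ereal_sup_le => _ [h /= hf <-]; exists h => //= x.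
apply: le_trans (hf x) _; rewrite /patch; case: ifPn => // /set_mem; exact: fg.
Qed.

Let ge0_integralZl_le D f (c : R) : (0 < c)%R -> (forall x, D x -> 0 <= f x) ->
  c%:E * \int[mu]_(x in D) f x <= \int[mu]_(x in D) (c%:E * f x).
Proof.
move=> c0 f0.
have cf0 x : D x -> 0 <= c%:E * f x.
  by move=> Dx; apply: mule_ge0; [rewrite lee_fin ltW | exact: f0].
rewrite (ge0_integralE mu f0) (ge0_integralE mu cf0) -ereal_sup_pZl //.
apply: ereal_sup_le => _ [_ [h /= hf <-] <-].
exists (scale_nnsfun h (ltW c0)); last by rewrite sintegralrM.
move=> x; have := hf x; rewrite /patch /=; case: ifPn => _ hx.
  by rewrite EFinM lee_pmul2l ?lte_fin.
suff -> : h x = 0%R by rewrite mulr0.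
by apply/eqP; rewrite eq_le fun_ge0 andbT -lee_fin.
Qed.

Lemma ge0_integralZl_nonmeas D f (c : R) : (0 < c)%R ->
  (forall x, D x -> 0 <= f x) ->
  \int[mu]_(x in D) (c%:E * f x) = c%:E * \int[mu]_(x in D) f x.
Proof.
move=> c0 f0; apply/eqP; rewrite eq_le ge0_integralZl_le // andbT.
have cf0 x : D x -> 0 <= c%:E * f x.
  by move=> Dx; apply: mule_ge0; [rewrite lee_fin ltW | exact: f0].
have ci0 : (0 < c^-1)%R by rewrite invr_gt0.
rewrite -(@lee_pmul2l _ c^-1%:E) ?lte_fin // muleA -EFinM mulVf ?gt_eqF // mul1e.
apply: le_trans (ge0_integralZl_le ci0 cf0) _.
by under eq_integral do rewrite muleA -EFinM mulVf ?gt_eqF // mul1e.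
Qed.

Lemma integralZl_gt0 D f (c : R) : (0 < c)%R ->
  \int[mu]_(x in D) (c%:E * f x) = c%:E * \int[mu]_(x in D) f x.
Proof.
move=> c0; rewrite integralE [in RHS]integralE.
rewrite ge0_funeposM ?ge0_funenegM ?ltW // gt0_muleBr //.
by rewrite !ge0_integralZl_nonmeas // => x _; rewrite ?funepos_ge0 ?funeneg_ge0.
Qed.

Lemma ge0_subset_integral_nonmeas A B f : A `<=` B -> (forall x, B x -> 0 <= f x) ->
  \int[mu]_(x in A) f x <= \int[mu]_(x in B) f x.
Proof.
move=> AB f0; rewrite integral_mkcond [leRHS]integral_mkcond.
apply: ge0_le_integral_nonmeas => x _; rewrite /patch.
  by case: ifPn => // /set_mem /AB /f0.
case: ifPn => [/set_mem Ax|_]; first by rewrite ifT //; exact/mem_set/AB.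
by case: ifPn => // /set_mem /f0.
Qed.

Lemma integral_subset_zero_outside A B f : A `<=` B ->
  (forall x, B x -> ~ A x -> f x = 0) ->
  \int[mu]_(x in B) f x = \int[mu]_(x in A) f x.
Proof.
move=> AB f0; rewrite integral_mkcond [RHS]integral_mkcond.
apply: eq_integral => x _; rewrite /patch.
have [Ax|nAx] := boolP (x \in A).
  by rewrite ifT //; exact/mem_set/AB/set_mem.
case: ifPn => // /set_mem Bx.
by apply: f0 => // /mem_set; exact/negP.
Qed.

End integral_without_measurability.

Lemma RintegralZl_gt0 d (T : measurableType d) (R : realType)
    (mu : {measure set T -> \bar R}) (D : set T) (f : T -> R) (c : R) : 0 < c ->
  \int[mu]_(x in D) (c * f x) = c * \int[mu]_(x in D) f x.
Proof.
by move=> c0; rewrite /Rintegral -gt0_fineZl // -integralZl_gt0.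
Qed.

Section kernel_bounds.
Context (R : realType) (tau cF mu : R).
Hypothesis mu_gt0 : 0 < mu.

Let kexp (u v : R) := cF ^+ 2 * (u * v) `^ (- alpha tau) / mu.

Let kexp_ge0 u v : 0 <= kexp u v.
Proof.
by rewrite /kexp mulr_ge0 ?invr_ge0 ?(ltW mu_gt0) // mulr_ge0 ?sqr_ge0 ?powR_ge0.
Qed.

Lemma kappa_ge0 a u v : 0 <= a -> 0 <= kappa tau cF mu a u v.
Proof.
by move=> a0; rewrite mulr_ge0 // subr_ge0 expR_le1 oppr_le0 kexp_ge0.
Qed.

Lemma kappa_le a u v : 0 <= a -> kappa tau cF mu a u v <= a.
Proof.
by move=> a0; rewrite -[leRHS]mulr1 ler_wpM2l // gerBl expR_ge0.
Qed.

Lemma kappa_gt0 a u v : 0 < cF -> 0 < a -> 0 < u -> 0 < v ->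
  0 < kappa tau cF mu a u v.
Proof.
move=> cF0 a0 u0 v0; rewrite /kappa mulr_gt0 // subr_gt0 expR_lt1 oppr_lt0.
by rewrite mulr_gt0 ?invr_gt0 // mulr_gt0 ?exprn_gt0 // powR_gt0 // mulr_gt0.
Qed.

Lemma kappa_corner_le a u v : 0 <= alpha tau -> 0 < u <= a -> 0 < v <= a ->
  kappa tau cF mu a a a <= kappa tau cF mu a u v.
Proof.
move=> alpha0 /andP[u0 ua] /andP[v0 va]; have a0 := lt_le_trans u0 ua.
rewrite ler_wpM2l ?(ltW a0) // lerD2l lerN2 ler_expR lerN2.
rewrite ler_wpM2r ?invr_ge0 ?(ltW mu_gt0) // ler_wpM2l ?sqr_ge0 // !powRN.
rewrite lef_pV2 ?posrE ?powR_gt0 ?mulr_gt0 //.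
by apply: ge0_ler_powR => //; [exact: mulr_ge0 (ltW u0) (ltW v0) |
  exact: mulr_ge0 (ltW a0) (ltW a0) | exact: ler_pM (ltW u0) (ltW v0) ua va].
Qed.

End kernel_bounds.

Section operators_on_intervals.
Context (R : realType).
Local Notation itv a := (`]0%R, a%R]%classic : set R).
Local Notation leb := (@lebesgue_measure R).

Lemma subset_itv0 (a b : R) : a <= b -> itv a `<=` itv b.
Proof. by move=> ab x /=; rewrite !in_itv /= => /andP[-> /le_trans]; exact. Qed.

Lemma Lam_int_sqr_ge0 (a : R) (f : R -> R) : 0 <= a ->
  (0 <= Lam_int a (fun x => (f x ^+ 2)%:E))%E.
Proof.
move=> a0; apply: mule_ge0; first by rewrite lee_fin invr_ge0.
by apply: integral_ge0 => x _; rewrite lee_fin sqr_ge0.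
Qed.

Lemma le_L2norm (a b : R) (f g : R -> R) : 0 <= a -> 0 <= b ->
  (Lam_int a (fun x => (f x ^+ 2)%:E) <= Lam_int b (fun x => (g x ^+ 2)%:E))%E ->
  (L2norm a f <= L2norm b g)%E.
Proof.
move=> a0 b0; apply: gt0_ler_poweR; rewrite ?invr_ge0 // in_itv /= leey andbT.
  exact: Lam_int_sqr_ge0.
exact: Lam_int_sqr_ge0.
Qed.

Lemma integral_cst_itv0 (a c : R) : 0 < a ->
  (\int[leb]_(x in itv a) c%:E = (c * a)%:E)%E.
Proof.
move=> a0; rewrite integral_cst //= lebesgue_measure_itv /= lte_fin a0.
by rewrite -EFinB subr0 -EFinM.
Qed.

Lemma Lam_int_cst (a c : R) : 0 < a -> Lam_int a (fun=> c%:E) = c%:E.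
Proof.
by move=> a0; rewrite /Lam_int integral_cst_itv0 // -EFinM mulrCA mulVf ?gt_eqF ?mulr1.
Qed.

Lemma unit_ball_cst1 (a : R) : 0 < a -> unit_ball a (fun=> 1).
Proof.
move=> a0; split; first exact: measurable_cst.
by rewrite /L2norm expr1n Lam_int_cst // poweR_EFin powR1.
Qed.

Lemma Lam_int_sqr_ge (a c : R) (f : R -> R) : 0 < a -> 0 <= c ->
  (forall x, itv a x -> c <= f x) ->
  ((c ^+ 2)%:E <= Lam_int a (fun x => (f x ^+ 2)%:E))%E.
Proof.
move=> a0 c0 cf; rewrite -(Lam_int_cst (c ^+ 2) a0).
apply: lee_wpmul2l; first by rewrite lee_fin invr_ge0 ltW.
apply: ge0_le_integral_nonmeas => x xa; rewrite lee_fin ?sqr_ge0 //.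
by rewrite ler_sqr ?nnegrE ?(le_trans c0 (cf x xa)) ?cf.
Qed.

Lemma Rintegral_itv_ge (a c M : R) (f : R -> R) : 0 < a -> 0 <= c ->
  (forall x, itv a x -> c <= f x <= M) -> c * a <= \int[leb]_(x in itv a) f x.
Proof.
move=> a0 c0 cfM; have f0 x : itv a x -> 0 <= f x.
  by move=> xa; have /andP[cf _] := cfM x xa; exact: le_trans cf.
have lb : ((c * a)%:E <= \int[leb]_(x in itv a) (f x)%:E)%E.
  rewrite -integral_cst_itv0 //; apply: ge0_le_integral_nonmeas => x xa.
    by rewrite lee_fin.
  by have /andP[] := cfM x xa.
have ub : (\int[leb]_(x in itv a) (f x)%:E <= (M * a)%:E)%E.
  rewrite -integral_cst_itv0 //; apply: ge0_le_integral_nonmeas => x xa.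
    by rewrite lee_fin f0.
  by have /andP[] := cfM x xa.
have ca0 : (0 <= (c * a)%:E)%E by rewrite lee_fin mulr_ge0 // ltW.
have fin : (\int[leb]_(x in itv a) (f x)%:E)%E \is a fin_num.
  by rewrite ge0_fin_numE ?(le_trans ca0 lb) // (le_lt_trans ub) ?ltry.
by rewrite -lee_fin /Rintegral fineK.
Qed.

(* [iso_embed a b] is the isometric embedding of L^2((0,a], Lambda_a) into
   L^2((0,b], Lambda_b): extension by zero, rescaled to compensate the change
   of normalisation of the measure. *)
Definition iso_embed (a b : R) (f : R -> R) : R -> R :=
  patch (fun=> 0) (itv a) (fun v => Num.sqrt (b / a) * f v).

Lemma L2norm_iso_embed (a b : R) (f : R -> R) : 0 < a -> a <= b ->
  L2norm b (iso_embed a b f) = L2norm a f.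
Proof.
move=> a0 ab; have b0 := lt_le_trans a0 ab.
have sqrt_ba : Num.sqrt (b / a) ^+ 2 = b / a by rewrite sqr_sqrtr // divr_ge0 ?ltW.
rewrite /L2norm /Lam_int; congr (_ `^ _)%E.
rewrite (integral_subset_zero_outside leb (subset_itv0 ab)); last first.
  move=> x _ xa; rewrite /iso_embed /patch ifF ?expr0n //.
  by apply/negbTE/negP => /set_mem.
under eq_integral => x xa do rewrite /iso_embed /patch xa exprMn sqrt_ba EFinM.
rewrite integralZl_gt0 ?divr_gt0 // muleA -EFinM.
by rewrite mulrA mulVf ?gt_eqF // mul1r.
Qed.

Lemma iso_embed_unit_ball (a b : R) (f : R -> R) : 0 < a -> a <= b ->
  unit_ball a f -> unit_ball b (iso_embed a b f).
Proof.
move=> a0 ab [mf nf]; split; last by rewrite L2norm_iso_embed.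
apply/(measurable_restrict _ (measurable_itv _) (measurable_itv _)).
by rewrite setIidr; [exact: measurable_funM | exact: subset_itv0].
Qed.

Lemma Top_iso_embed (tau cF mu a b : R) (f : R -> R) (u : R) : 0 < a -> a <= b ->
  Top tau cF mu b (iso_embed a b f) u = Num.sqrt (b / a) * Top tau cF mu a f u.
Proof.
move=> a0 ab; have b0 := lt_le_trans a0 ab.
have s0 : 0 < Num.sqrt (b / a) by rewrite sqrtr_gt0 divr_gt0.
rewrite /Top /Rintegral (integral_subset_zero_outside leb (subset_itv0 ab)); last first.
  move=> x _ xa; rewrite /iso_embed /patch ifF ?mulr0 //.
  by apply/negbTE/negP => /set_mem.
have kappaE x : kappa tau cF mu b u x * (Num.sqrt (b / a) * f x) =
    b / a * Num.sqrt (b / a) * (kappa tau cF mu a u x * f x).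
  by rewrite /kappa; field; rewrite gt_eqF.
under eq_integral => x xa do rewrite /iso_embed /patch xa kappaE EFinM.
have c0 : 0 < b / a * Num.sqrt (b / a) by rewrite mulr_gt0 ?divr_gt0.
rewrite integralZl_gt0 // gt0_fineZl //.
by field; rewrite !gt_eqF.
Qed.

Lemma L2norm_Top_iso_embed (tau cF mu a b : R) (f : R -> R) : 0 < a -> a <= b ->
  (L2norm a (Top tau cF mu a f) <= L2norm b (Top tau cF mu b (iso_embed a b f)))%E.
Proof.
move=> a0 ab; have b0 := lt_le_trans a0 ab; have ba0 : 0 < b / a by rewrite divr_gt0.
apply: le_L2norm; [exact: ltW | exact: ltW | rewrite /Lam_int].
set Tf := Top tau cF mu a f; set Tg := Top tau cF mu b (iso_embed a b f).
have TgE : (\int[leb]_(x in itv a) (Tg x ^+ 2)%:E =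
    (b / a)%:E * \int[leb]_(x in itv a) (Tf x ^+ 2)%:E)%E.
  rewrite -integralZl_gt0 //; apply: eq_integral => x _.
  by rewrite /Tg Top_iso_embed // exprMn sqr_sqrtr ?(ltW ba0) // EFinM.
have Tg_sub : (\int[leb]_(x in itv a) (Tg x ^+ 2)%:E <=
    \int[leb]_(x in itv b) (Tg x ^+ 2)%:E)%E.
  apply: ge0_subset_integral_nonmeas; first exact: subset_itv0.
  by move=> x _; rewrite lee_fin sqr_ge0.
apply: (le_trans _ (lee_wpmul2l _ Tg_sub)); last by rewrite lee_fin invr_ge0 ltW.
by rewrite TgE muleA -EFinM mulrA mulVf ?gt_eqF // mul1r.
Qed.

Lemma opnorm_le (tau cF mu a b : R) : 0 < a -> a <= b ->
  (opnorm tau cF mu a <= opnorm tau cF mu b)%E.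
Proof.
move=> a0 ab; apply: ge_ereal_sup => _ [f uf <-].
apply: le_trans (L2norm_Top_iso_embed _ _ _ f a0 ab) _.
by apply: ereal_sup_ubound; exists (iso_embed a b f) => //; exact: iso_embed_unit_ball.
Qed.

Lemma Top_cst1_ge (tau cF mu a u : R) : 0 < mu -> 0 <= alpha tau ->
  0 < u <= a -> kappa tau cF mu a a a <= Top tau cF mu a (fun=> 1) u.
Proof.
move=> mu0 alpha0 /andP[u0 ua]; have a0 := lt_le_trans u0 ua.
rewrite /Top -[leLHS](mulKf (lt0r_neq0 a0)) ler_wpM2l ?invr_ge0 ?(ltW a0) // mulrC.
apply: (Rintegral_itv_ge (M := a)) => //; first by rewrite kappa_ge0 // ltW.
move=> x; rewrite /= in_itv /= => /andP[x0 xa].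
rewrite mulr1 kappa_le ?(ltW a0) // andbT.
by apply: kappa_corner_le => //; rewrite ?u0 ?x0.
Qed.

Lemma opnorm_gt0 (tau cF mu a : R) : 0 < cF -> 0 < mu ->
  0 <= alpha tau -> 0 < a -> (0 < opnorm tau cF mu a)%E.
Proof.
move=> cF0 mu0 alpha0 a0; have k0 := kappa_gt0 tau mu0 cF0 a0 a0 a0.
have le_opnorm : (L2norm a (Top tau cF mu a (fun=> 1%R)) <= opnorm tau cF mu a)%E.
  by apply: ereal_sup_ubound; exists (fun=> 1) => //; exact: unit_ball_cst1.
apply: lt_le_trans le_opnorm.
apply: poweR_gt0; apply: (lt_le_trans _ (Lam_int_sqr_ge a0 (ltW k0) _)).
  by rewrite lte_fin exprn_gt0.
by move=> x; rewrite /= in_itv /=; exact: Top_cst1_ge.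
Qed.

End operators_on_intervals.

Theorem lemma4p3 (R : realType) (tau cF mu : R) :
  2 < tau -> tau < 3 -> 0 < cF -> 0 < mu ->
  forall a b : R, 0 < a -> a <= b ->
    lambda_c tau cF mu b <= lambda_c tau cF mu a.
Proof.
(* Only tau > 1, i.e. alpha >= 0, is needed. *)
move=> tau_gt2 _ cF0 mu0 a b a0 ab.
have alpha0 : 0 <= alpha tau.
  by rewrite invr_ge0 subr_ge0 ltW // (lt_trans _ tau_gt2) ?ltr1n.
by apply: fine_invr_le; [exact: opnorm_gt0 | exact: opnorm_le].
Qed.
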